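(* Consider, on $\{(\theta_1,\dots,\theta_4,I_1,\dots,I_4)\in\mathbb{T}^4\times(0,\infty)^4\}$, the Hamiltonian \[ \mathcal{G}:=2\sqrt{I_1I_2I_3I_4}\,\cos(\theta_1-\theta_2+\theta_3-\theta_4), \] with $(\theta_i,I_i)$, $i=1,\dots,4$, canonically conjugate pairs. Let $\mathtt{c}>0$. Then for every sufficiently small $\varepsilon>0$ with $\mathtt{c}>\tfrac83\varepsilon$ there exists an orbit $g_{\varepsilon,\mathtt{c}}(t)=(\theta_1(t),\dots,\theta_4(t),I_1(t),\dots,I_4(t))$ of $\mathcal{G}$ and a time $T_0>0$ such that \[ I_1(0)=I_2(0)=I_3(0)=\frac{\mathtt{c}-\varepsilon}{3},\qquad I_4(0)=\varepsilon, \] \[ I_1(T_0)=I_3(T_0)=\frac{\mathtt{c}}{6}+\frac{2\varepsilon}{3},\qquad I_2(T_0)=\frac{\mathtt{c}}{2}-\frac{4\varepsilon}{3},\qquad I_4(T_0)=\frac{\mathtt{c}}{6}, \] and $T_0\le\dfrac{6}{\mathtt{c}}$.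
   Context: The orbit is a solution of Hamilton's equations $\dot\theta_i=\partial_{I_i}\mathcal{G}$, $\dot I_i=-\partial_{\theta_i}\mathcal{G}$, $i=1,\dots,4$. ''Sufficiently small $\varepsilon$'' means $\varepsilon$ below a threshold that may depend on $\mathtt{c}$. *)

From Stdlib Require Import Reals Lra.
From Coquelicot Require Import Coquelicot.
Open Scope R_scope.

(* The Hamiltonian G(θ1..θ4, I1..I4) = 2 sqrt(I1 I2 I3 I4) cos(θ1-θ2+θ3-θ4).
   Angles are represented by real lifts (G is 2π-periodic in each θi). *)
Definition G (th1 th2 th3 th4 I1 I2 I3 I4 : R) : R :=
  2 * sqrt (I1 * I2 * I3 * I4) * cos (th1 - th2 + th3 - th4).

Definition hamilton_at (th1 th2 th3 th4 I1 I2 I3 I4 : R -> R) (t : R) : Prop :=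
  let a1 := th1 t in let a2 := th2 t in let a3 := th3 t in let a4 := th4 t in
  let j1 := I1 t in let j2 := I2 t in let j3 := I3 t in let j4 := I4 t in
  is_derive th1 t (Derive (fun x => G a1 a2 a3 a4 x j2 j3 j4) j1) /\
  is_derive th2 t (Derive (fun x => G a1 a2 a3 a4 j1 x j3 j4) j2) /\
  is_derive th3 t (Derive (fun x => G a1 a2 a3 a4 j1 j2 x j4) j3) /\
  is_derive th4 t (Derive (fun x => G a1 a2 a3 a4 j1 j2 j3 x) j4) /\
  is_derive I1 t (- Derive (fun x => G x a2 a3 a4 j1 j2 j3 j4) a1) /\
  is_derive I2 t (- Derive (fun x => G a1 x a3 a4 j1 j2 j3 j4) a2) /\
  is_derive I3 t (- Derive (fun x => G a1 a2 x a4 j1 j2 j3 j4) a3) /\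
  is_derive I4 t (- Derive (fun x => G a1 a2 a3 x j1 j2 j3 j4) a4).

Definition orbit_on (T : R) (th1 th2 th3 th4 I1 I2 I3 I4 : R -> R) : Prop :=
  forall t, 0 <= t <= T ->
    0 < I1 t /\ 0 < I2 t /\ 0 < I3 t /\ 0 < I4 t /\
    hamilton_at th1 th2 th3 th4 I1 I2 I3 I4 t.

From Stdlib Require Import Reals Lra.
From Coquelicot Require Import Coquelicot.
Open Scope R_scope.

(* Freeze the angles at phase θ1 - θ2 + θ3 - θ4 = -π/2.  Then cos vanishes, so
   the angles stay put, and the actions obey I1' = I3' = -I2' = -I4' = -2 sqrt(I1 I2 I3 I4);
   hence I1 = I3, and I1 + I2 = s and I2 - I4 = s (1 - k^2) are conserved.
   Writing I2 = s (1 - k^2) / (1 - k^2 v^2) turns the remaining equation into the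
   Riccati equation v' = s k (1 - v^2), solved by v = tanh (s k t + const).  With
   s = 2 (c - ε) / 3 and k^2 = (c + 2ε) / (2 (c - ε)) the initial and final data
   correspond to v^2 = 6ε / (c + 2ε) and v^2 = 2c (c - ε) / ((c + 2ε) (3c - 8ε)).
   For ε < c/8 the travel time (artanh v1 - artanh v0) / (s k) is at most
   2 / (s k) <= 6 / c. *)

Lemma Derive_G_th1 a1 a2 a3 a4 j1 j2 j3 j4 :
  Derive (fun x => G x a2 a3 a4 j1 j2 j3 j4) a1
  = - (2 * sqrt (j1 * j2 * j3 * j4)) * sin (a1 - a2 + a3 - a4).
Proof. apply is_derive_unique; unfold G; auto_derive; auto; unfold Rminus; ring. Qed.

Lemma Derive_G_th2 a1 a2 a3 a4 j1 j2 j3 j4 :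
  Derive (fun x => G a1 x a3 a4 j1 j2 j3 j4) a2
  = 2 * sqrt (j1 * j2 * j3 * j4) * sin (a1 - a2 + a3 - a4).
Proof. apply is_derive_unique; unfold G; auto_derive; auto; unfold Rminus; ring. Qed.

Lemma Derive_G_th3 a1 a2 a3 a4 j1 j2 j3 j4 :
  Derive (fun x => G a1 a2 x a4 j1 j2 j3 j4) a3
  = - (2 * sqrt (j1 * j2 * j3 * j4)) * sin (a1 - a2 + a3 - a4).
Proof. apply is_derive_unique; unfold G; auto_derive; auto; unfold Rminus; ring. Qed.

Lemma Derive_G_th4 a1 a2 a3 a4 j1 j2 j3 j4 :
  Derive (fun x => G a1 a2 a3 x j1 j2 j3 j4) a4
  = 2 * sqrt (j1 * j2 * j3 * j4) * sin (a1 - a2 + a3 - a4).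
Proof. apply is_derive_unique; unfold G; auto_derive; auto; unfold Rminus; ring. Qed.

Lemma G_cos_eq0 a1 a2 a3 a4 j1 j2 j3 j4 :
  cos (a1 - a2 + a3 - a4) = 0 -> G a1 a2 a3 a4 j1 j2 j3 j4 = 0.
Proof. intros Hc; unfold G; rewrite Hc; ring. Qed.

Lemma Derive_eq0 (f : R -> R) x : (forall y, f y = 0) -> Derive f x = 0.
Proof. intros Hf; rewrite (Derive_ext f (fun _ => 0)) by exact Hf; apply Derive_const. Qed.

Lemma hamilton_at_resonant a1 a2 a3 a4 (I1 I2 I3 I4 : R -> R) t :
  a1 - a2 + a3 - a4 = - (PI / 2) ->
  is_derive I1 t (- (2 * sqrt (I1 t * I2 t * I3 t * I4 t))) ->
  is_derive I2 t (2 * sqrt (I1 t * I2 t * I3 t * I4 t)) ->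
  is_derive I3 t (- (2 * sqrt (I1 t * I2 t * I3 t * I4 t))) ->
  is_derive I4 t (2 * sqrt (I1 t * I2 t * I3 t * I4 t)) ->
  hamilton_at (fun _ => a1) (fun _ => a2) (fun _ => a3) (fun _ => a4) I1 I2 I3 I4 t.
Proof.
  intros Hphase D1 D2 D3 D4.
  assert (Hsin : sin (a1 - a2 + a3 - a4) = -1)
    by (rewrite Hphase, sin_neg, sin_PI2; ring).
  assert (Hcos : cos (a1 - a2 + a3 - a4) = 0)
    by (rewrite Hphase, cos_neg; apply cos_PI2).
  unfold hamilton_at; cbv beta zeta.
  rewrite Derive_G_th1, Derive_G_th2, Derive_G_th3, Derive_G_th4, Hsin.
  rewrite !Derive_eq0 by (intros; apply G_cos_eq0, Hcos).
  set (rate := 2 * sqrt (I1 t * I2 t * I3 t * I4 t)) in *.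
  replace (- (- rate * -1)) with (- rate) by ring.
  replace (- (rate * -1)) with rate by ring.
  do 4 (split; [apply (is_derive_const (V := R_NormedModule)) |]); tauto.
Qed.

Definition odds (v : R) : R := (1 + v) / (1 - v).

(* tanh (b t + artanh v0), written through w = e^(2 artanh v0 + 2 b t) = odds v0 * e^(2 b t). *)
Definition tanh_flow (b v0 t : R) : R :=
  (odds v0 * exp (2 * b * t) - 1) / (odds v0 * exp (2 * b * t) + 1).

Definition flow_time (b v0 v1 : R) : R := ln (odds v1 / odds v0) / (2 * b).

Lemma odds_pos v : -1 < v < 1 -> 0 < odds v.
Proof. intros Hv; unfold odds; apply Rdiv_lt_0_compat; lra. Qed.

Lemma odds_gt1 v : 0 < v < 1 -> 1 < odds v.
Proof. intros Hv; unfold odds; apply Rlt_div_r; lra. Qed.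

Lemma odds_ge1 v : 0 <= v < 1 -> 1 <= odds v.
Proof.
  intros [[Hv | <-] Hv1]; [left; apply odds_gt1; lra |].
  unfold odds; right; field.
Qed.

Lemma odds_lt v0 v1 : -1 < v0 -> v0 < v1 -> v1 < 1 -> odds v0 < odds v1.
Proof.
  intros H0 H01 H1; unfold odds.
  apply (Rmult_lt_reg_r ((1 - v0) * (1 - v1))); [nra|].
  replace ((1 + v0) / (1 - v0) * ((1 - v0) * (1 - v1))) with ((1 + v0) * (1 - v1))
    by (field; lra).
  replace ((1 + v1) / (1 - v1) * ((1 - v0) * (1 - v1))) with ((1 + v1) * (1 - v0))
    by (field; lra).
  nra.
Qed.

Lemma odds_inv v : v <> 1 -> (odds v - 1) / (odds v + 1) = v.
Proof.
  intros Hv; unfold odds.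
  assert (1 - v <> 0) by (intro; apply Hv; lra).
  field; lra.
Qed.

Lemma tanh_flow_0 b v0 : v0 <> 1 -> tanh_flow b v0 0 = v0.
Proof. intros Hv; unfold tanh_flow; rewrite Rmult_0_r, exp_0, Rmult_1_r; apply odds_inv, Hv. Qed.

Lemma tanh_flow_time b v0 v1 : b <> 0 -> -1 < v0 < 1 -> -1 < v1 < 1 ->
  tanh_flow b v0 (flow_time b v0 v1) = v1.
Proof.
  intros Hb Hv0 Hv1; unfold tanh_flow, flow_time.
  pose proof (odds_pos v0 Hv0); pose proof (odds_pos v1 Hv1).
  replace (2 * b * (ln (odds v1 / odds v0) / (2 * b))) with (ln (odds v1 / odds v0))
    by (field; assumption).
  rewrite exp_ln by (apply Rdiv_lt_0_compat; assumption).
  replace (odds v0 * (odds v1 / odds v0)) with (odds v1) by (field; lra).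
  apply odds_inv; lra.
Qed.

Lemma tanh_flow_bound b v0 t : -1 < v0 < 1 -> -1 < tanh_flow b v0 t < 1.
Proof.
  intros Hv0; unfold tanh_flow.
  assert (0 < odds v0 * exp (2 * b * t))
    by (apply Rmult_lt_0_compat; [apply odds_pos, Hv0 | apply exp_pos]).
  set (w := odds v0 * exp (2 * b * t)) in *.
  split; [apply Rlt_div_r | apply Rlt_div_l]; lra.
Qed.

Lemma tanh_flow_in_01 b v0 t : 0 <= b -> 0 <= t -> 0 < v0 < 1 -> 0 < tanh_flow b v0 t < 1.
Proof.
  intros Hb Ht Hv0; split; [| apply tanh_flow_bound; lra].
  assert (1 <= exp (2 * b * t)) by (pose proof (exp_ineq1_le (2 * b * t)); nra).
  pose proof (odds_gt1 v0 Hv0).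
  unfold tanh_flow; apply Rdiv_lt_0_compat; nra.
Qed.

Lemma is_derive_tanh_flow b v0 t : -1 < v0 < 1 ->
  is_derive (tanh_flow b v0) t (b * (1 - tanh_flow b v0 t ^ 2)).
Proof.
  intros Hv0; pose proof (odds_pos v0 Hv0); unfold tanh_flow.
  assert (0 < odds v0 * exp (2 * b * t)) by (apply Rmult_lt_0_compat; [lra | apply exp_pos]).
  auto_derive; [lra |].
  field; lra.
Qed.

Lemma flow_time_pos b v0 v1 : 0 < b -> -1 < v0 -> v0 < v1 -> v1 < 1 ->
  0 < flow_time b v0 v1.
Proof.
  intros Hb H0 H01 H1; unfold flow_time.
  pose proof (odds_pos v0 (conj H0 (Rlt_trans _ _ _ H01 H1))).
  pose proof (odds_lt v0 v1 H0 H01 H1).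
  apply Rdiv_lt_0_compat; [| lra].
  rewrite <- ln_1; apply ln_increasing; [lra |].
  apply Rlt_div_r; lra.
Qed.

Lemma exp_4_gt_16 : 16 < exp 4.
Proof.
  pose proof (exp_ineq1 1 ltac:(lra)).
  replace 4 with (1 + 1 + 1 + 1) by ring; rewrite !exp_plus.
  assert (4 < exp 1 * exp 1) by nra.
  nra.
Qed.

Lemma flow_time_le b v0 v1 : 0 < b -> 0 <= v0 < 1 -> 0 <= v1 -> v1 ^ 2 <= 3 / 4 ->
  flow_time b v0 v1 <= 2 / b.
Proof.
  intros Hb Hv0 Hv1 Hv1sq; unfold flow_time.
  assert (Hv1lt : 17 * v1 <= 15) by nra.
  assert (Hodds1 : odds v1 <= 16) by (unfold odds; apply Rle_div_l; lra).
  pose proof (odds_pos v1 ltac:(lra)).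
  pose proof (odds_ge1 v0 Hv0).
  assert (Hratio : odds v1 / odds v0 <= odds v1).
  { apply Rle_div_l; nra. }
  assert (Hln : ln (odds v1 / odds v0) <= 4).
  { rewrite <- (ln_exp 4); apply ln_le; [apply Rdiv_lt_0_compat; lra |].
    pose proof exp_4_gt_16; lra. }
  apply Rle_div_l; [lra |].
  replace (2 / b * (2 * b)) with 4 by (field; lra).
  assumption.
Qed.

Definition act1 (s k v : R) : R := s * k ^ 2 * (1 - v ^ 2) / (1 - (k * v) ^ 2).
Definition act2 (s k v : R) : R := s * (1 - k ^ 2) / (1 - (k * v) ^ 2).
Definition act4 (s k v : R) : R := s * (1 - k ^ 2) * (k * v) ^ 2 / (1 - (k * v) ^ 2).
Definition flux (s k v : R) : R :=
  s ^ 2 * k ^ 3 * (1 - k ^ 2) * v * (1 - v ^ 2) / (1 - (k * v) ^ 2) ^ 2.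

Lemma act1_add_act2 s k v : 1 - (k * v) ^ 2 <> 0 -> act1 s k v + act2 s k v = s.
Proof. intros Hd; unfold act1, act2; field; assumption. Qed.

Lemma act2_sub_act4 s k v : 1 - (k * v) ^ 2 <> 0 -> act2 s k v - act4 s k v = s * (1 - k ^ 2).
Proof. intros Hd; unfold act2, act4; field; assumption. Qed.

Lemma actions_pos s k v : 0 < s -> 0 < k < 1 -> 0 < v < 1 ->
  0 < act1 s k v /\ 0 < act2 s k v /\ 0 < act4 s k v.
Proof.
  intros Hs Hk Hv.
  assert (Hk2 : 0 < k ^ 2 < 1) by (split; nra).
  assert (Hv2 : 0 < v ^ 2 < 1) by (split; nra).
  assert (Hkv : 0 < k * v < 1) by (split; nra).
  assert (Hd : 0 < 1 - (k * v) ^ 2) by nra.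
  unfold act1, act2, act4; repeat split; apply Rdiv_lt_0_compat; try lra;
    repeat apply Rmult_lt_0_compat; lra.
Qed.

Lemma sqrt_actions s k v : 0 < s -> 0 < k < 1 -> 0 < v < 1 ->
  sqrt (act1 s k v * act2 s k v * act1 s k v * act4 s k v) = flux s k v.
Proof.
  intros Hs Hk Hv.
  assert (Hkv : 0 < k * v < 1) by (split; nra).
  assert (Hd : 0 < 1 - (k * v) ^ 2) by nra.
  assert (Hflux : 0 <= flux s k v).
  { unfold flux; apply Rlt_le, Rdiv_lt_0_compat; [| nra].
    assert (0 < s ^ 2 * k ^ 3) by (apply Rmult_lt_0_compat; apply pow_lt; lra).
    assert (0 < 1 - k ^ 2) by nra. assert (0 < 1 - v ^ 2) by nra.
    repeat apply Rmult_lt_0_compat; lra. }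
  rewrite <- (sqrt_pow2 (flux s k v) Hflux); f_equal.
  unfold act1, act2, act4, flux; field; lra.
Qed.

Lemma is_derive_act2 s k (v : R -> R) t :
  1 - (k * v t) ^ 2 <> 0 -> is_derive v t (s * k * (1 - v t ^ 2)) ->
  is_derive (fun t => act2 s k (v t)) t (2 * flux s k (v t)).
Proof.
  intros Hd Hv.
  set (y := v t) in *.
  set (dact2 := 2 * s * (1 - k ^ 2) * k ^ 2 * y / (1 - (k * y) ^ 2) ^ 2).
  assert (Hact2 : is_derive (act2 s k) y dact2).
  { unfold act2, dact2; auto_derive; [exact Hd | field; exact Hd]. }
  replace (2 * flux s k y) with (s * k * (1 - y ^ 2) * dact2)
    by (unfold flux, dact2; field; exact Hd).
  exact (is_derive_comp (act2 s k) v t _ _ Hact2 Hv).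
Qed.

Lemma is_derive_act1 s k (v : R -> R) t :
  (forall u, 1 - (k * v u) ^ 2 <> 0) -> is_derive v t (s * k * (1 - v t ^ 2)) ->
  is_derive (fun t => act1 s k (v t)) t (- (2 * flux s k (v t))).
Proof.
  intros Hd Hv.
  apply (is_derive_ext (fun u => s - act2 s k (v u))).
  { intros u; pose proof (act1_add_act2 s k (v u) (Hd u)); lra. }
  replace (- (2 * flux s k (v t))) with (0 - 2 * flux s k (v t)) by ring.
  apply (is_derive_minus (fun _ => s)).
  - apply (is_derive_const (V := R_NormedModule)).
  - apply is_derive_act2; auto.
Qed.

Lemma is_derive_act4 s k (v : R -> R) t :
  (forall u, 1 - (k * v u) ^ 2 <> 0) -> is_derive v t (s * k * (1 - v t ^ 2)) ->
  is_derive (fun t => act4 s k (v t)) t (2 * flux s k (v t)).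
Proof.
  intros Hd Hv.
  apply (is_derive_ext (fun u => act2 s k (v u) - s * (1 - k ^ 2))).
  { intros u; pose proof (act2_sub_act4 s k (v u) (Hd u)); lra. }
  replace (2 * flux s k (v t)) with (2 * flux s k (v t) - 0) by ring.
  apply (is_derive_minus _ (fun _ => s * (1 - k ^ 2))).
  - apply is_derive_act2; auto.
  - apply (is_derive_const (V := R_NormedModule)).
Qed.

Lemma orbit_on_tanh_flow s k v0 T : 0 < s -> 0 < k < 1 -> 0 < v0 < 1 ->
  orbit_on T (fun _ => - (PI / 2)) (fun _ => 0) (fun _ => 0) (fun _ => 0)
    (fun t => act1 s k (tanh_flow (s * k) v0 t)) (fun t => act2 s k (tanh_flow (s * k) v0 t))
    (fun t => act1 s k (tanh_flow (s * k) v0 t)) (fun t => act4 s k (tanh_flow (s * k) v0 t)).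
Proof.
  intros Hs Hk Hv0 t [Ht _].
  set (v := tanh_flow (s * k) v0).
  assert (Hvt : 0 < v t < 1) by (apply tanh_flow_in_01; nra).
  assert (Hd : forall u, 1 - (k * v u) ^ 2 <> 0).
  { intros u; assert (Hvu : -1 < v u < 1) by (apply tanh_flow_bound; lra).
    assert (-1 < k * v u < 1) by (split; nra). nra. }
  assert (Hv : is_derive v t (s * k * (1 - v t ^ 2))) by (apply is_derive_tanh_flow; lra).
  destruct (actions_pos s k (v t) Hs Hk Hvt) as [P1 [P2 P4]].
  do 4 (split; [assumption |]).
  apply hamilton_at_resonant; [ring | ..]; rewrite sqrt_actions by assumption.
  - apply is_derive_act1; assumption.
  - apply is_derive_act2; auto.
  - apply is_derive_act1; assumption.
  - apply is_derive_act4; assumption.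
Qed.

Definition sum12 (c e : R) : R := 2 * (c - e) / 3.
Definition kappa (c e : R) : R := sqrt ((c + 2 * e) / (2 * (c - e))).
Definition v_init (c e : R) : R := sqrt (6 * e / (c + 2 * e)).
Definition v_final (c e : R) : R := sqrt (2 * c * (c - e) / ((c + 2 * e) * (3 * c - 8 * e))).

Lemma sqrt_in_01 x : 0 < x < 1 -> 0 < sqrt x < 1.
Proof.
  intros Hx; split; [apply sqrt_lt_R0; lra |].
  rewrite <- sqrt_1; apply sqrt_lt_1_alt; lra.
Qed.

Lemma kappa_sq c e : 0 < e -> 4 * e < c -> kappa c e ^ 2 = (c + 2 * e) / (2 * (c - e)).
Proof. intros; apply pow2_sqrt, Rlt_le, Rdiv_lt_0_compat; lra. Qed.

Lemma kappa_in_01 c e : 0 < e -> 4 * e < c -> 0 < kappa c e < 1.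
Proof.
  intros He Hc; apply sqrt_in_01; split; [apply Rdiv_lt_0_compat | apply Rlt_div_l]; lra.
Qed.

Lemma v_init_sq c e : 0 < e -> 4 * e < c -> v_init c e ^ 2 = 6 * e / (c + 2 * e).
Proof. intros; apply pow2_sqrt, Rlt_le, Rdiv_lt_0_compat; lra. Qed.

Lemma v_init_in_01 c e : 0 < e -> 4 * e < c -> 0 < v_init c e < 1.
Proof.
  intros He Hc; apply sqrt_in_01; split; [apply Rdiv_lt_0_compat | apply Rlt_div_l]; lra.
Qed.

Lemma v_final_sq c e : 0 < e -> 8 * e < c ->
  v_final c e ^ 2 = 2 * c * (c - e) / ((c + 2 * e) * (3 * c - 8 * e)).
Proof. intros; apply pow2_sqrt, Rlt_le, Rdiv_lt_0_compat; nra. Qed.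

Lemma v_final_le c e : 0 < e -> 8 * e < c -> v_final c e ^ 2 <= 3 / 4.
Proof.
  intros He Hc; rewrite v_final_sq by assumption.
  cut (0 <= 3 / 4 - 2 * c * (c - e) / ((c + 2 * e) * (3 * c - 8 * e))); [lra |].
  replace (3 / 4 - 2 * c * (c - e) / ((c + 2 * e) * (3 * c - 8 * e)))
    with ((c ^ 2 + 2 * c * e - 48 * e ^ 2) / (4 * ((c + 2 * e) * (3 * c - 8 * e))))
    by (field; nra).
  apply Rlt_le, Rdiv_lt_0_compat; nra.
Qed.

Lemma v_init_lt_v_final c e : 0 < e -> 8 * e < c -> v_init c e < v_final c e.
Proof.
  intros He Hc; apply sqrt_lt_1_alt; split; [apply Rlt_le, Rdiv_lt_0_compat; lra |].
  cut (0 < 2 * c * (c - e) / ((c + 2 * e) * (3 * c - 8 * e)) - 6 * e / (c + 2 * e)); [lra |].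
  replace (2 * c * (c - e) / ((c + 2 * e) * (3 * c - 8 * e)) - 6 * e / (c + 2 * e))
    with (2 * (c - 4 * e) * (c - 6 * e) / ((c + 2 * e) * (3 * c - 8 * e)))
    by (field; nra).
  apply Rdiv_lt_0_compat; nra.
Qed.

Lemma sum12_mul_kappa_ge c e : 0 < e -> 8 * e < c -> c / 3 <= sum12 c e * kappa c e.
Proof.
  intros He Hc.
  pose proof (kappa_sq c e He ltac:(lra)); pose proof (kappa_in_01 c e He ltac:(lra)).
  assert (Hsq : (sum12 c e * kappa c e) ^ 2 = 2 * (c - e) * (c + 2 * e) / 9).
  { rewrite Rpow_mult_distr, H; unfold sum12; field; lra. }
  assert (0 <= sum12 c e * kappa c e) by (unfold sum12; apply Rmult_le_pos; lra).
  nra.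
Qed.

Lemma actions_init c e : 0 < e -> 8 * e < c ->
  let s := sum12 c e in let k := kappa c e in let v := v_init c e in
  act1 s k v = (c - e) / 3 /\ act2 s k v = (c - e) / 3 /\ act4 s k v = e.
Proof.
  intros He Hc s k v; unfold act1, act2, act4, s, k, v, sum12.
  rewrite Rpow_mult_distr, kappa_sq, v_init_sq by lra.
  repeat split; field; nra.
Qed.

Lemma actions_final c e : 0 < e -> 8 * e < c ->
  let s := sum12 c e in let k := kappa c e in let v := v_final c e in
  act1 s k v = c / 6 + 2 * e / 3 /\ act2 s k v = c / 2 - 4 * e / 3 /\ act4 s k v = c / 6.
Proof.
  intros He Hc s k v; unfold act1, act2, act4, s, k, v, sum12.
  rewrite Rpow_mult_distr, kappa_sq, v_final_sq by lra.
  repeat split; field; nra.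
Qed.

Theorem lemma4p1 :
  forall c : R, 0 < c ->
  exists eps0 : R, 0 < eps0 /\
  forall eps : R, 0 < eps -> eps < eps0 -> c > 8 / 3 * eps ->
  exists (th1 th2 th3 th4 I1 I2 I3 I4 : R -> R) (T0 : R),
    0 < T0 /\
    orbit_on T0 th1 th2 th3 th4 I1 I2 I3 I4 /\
    I1 0 = (c - eps) / 3 /\ I2 0 = (c - eps) / 3 /\ I3 0 = (c - eps) / 3 /\
    I4 0 = eps /\
    I1 T0 = c / 6 + 2 * eps / 3 /\ I3 T0 = c / 6 + 2 * eps / 3 /\
    I2 T0 = c / 2 - 4 * eps / 3 /\ I4 T0 = c / 6 /\
    T0 <= 6 / c.
Proof.
  intros c Hc; exists (c / 8); split; [lra |]; intros e He He0 _.
  assert (Hce : 8 * e < c) by lra.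
  pose proof (kappa_in_01 c e He ltac:(lra)) as Hk.
  pose proof (v_init_in_01 c e He ltac:(lra)) as Hv0.
  pose proof (v_init_lt_v_final c e He Hce) as Hv01.
  pose proof (v_final_le c e He Hce) as Hv1.
  pose proof (sum12_mul_kappa_ge c e He Hce) as Hb.
  destruct (actions_init c e He Hce) as (A1 & A2 & A4).
  destruct (actions_final c e He Hce) as (B1 & B2 & B4).
  assert (Hs : 0 < sum12 c e) by (unfold sum12; lra).
  set (s := sum12 c e) in *; set (k := kappa c e) in *.
  set (v0 := v_init c e) in *; set (v1 := v_final c e) in *.
  set (v := tanh_flow (s * k) v0).
  exists (fun _ => - (PI / 2)), (fun _ => 0), (fun _ => 0), (fun _ => 0),
    (fun t => act1 s k (v t)), (fun t => act2 s k (v t)),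
    (fun t => act1 s k (v t)), (fun t => act4 s k (v t)), (flow_time (s * k) v0 v1).
  split; [apply flow_time_pos; nra |].
  split; [apply orbit_on_tanh_flow; assumption |].
  unfold v; rewrite tanh_flow_0, tanh_flow_time by nra.
  repeat split; try assumption.
  apply Rle_trans with (2 / (s * k)); [apply flow_time_le; nra |].
  apply (Rmult_le_reg_r (s * k * c)); [nra |].
  replace (2 / (s * k) * (s * k * c)) with (2 * c) by (field; nra).
  replace (6 / c * (s * k * c)) with (6 * (s * k)) by (field; lra).
  lra.
Qed.
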